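(* Suppose no agent is faulty, the directed graph $G$ on $\{1,\dots,n\}$ is strongly connected, and every agent runs Failure-free BFL. Let $\lambda=\big(1-(1/n)^n\big)^{1/n}$, let $\theta\neq\theta^*$, and let $\psi_t^i(\theta,\theta^* )=\log\frac{\mu_t^i(\theta)}{\mu_t^i(\theta^* )}$. Then for each agent $i$ and each $t\ge1$, $$\mathbb{E}^*\big[\psi_t^i(\theta,\theta^* )\big]\le\frac{nC_0}{(1-\frac{1}{n^n})(1-\lambda)}\,t-\frac{C_1}{2n^n}\,t^2 .$$
   Context: Finite hypothesis set $\Theta=\{\theta_1,\dots,\theta_m\}$, true state $\theta^*$. Agent $i$ has finite signal space $\mathcal{S}_i$ and likelihoods $\ell_i(\cdot\mid\theta)$ with full support; in iteration $t$ it observes $s_t^i\sim\ell_i(\cdot\mid\theta^* )$, independently across agents and iterations; $\ell_i(s_{1,t}^i\mid\theta)=\prod_{r=1}^t\ell_i(s_r^i\mid\theta)$. $\mathbb{E}^*$ denotes expectation when signals are drawn under $\theta^*$. $\mathcal{I}_i$ is the set of incoming neighbors of $i$. Failure-free BFL: $\mu_0^i$ uniform on $\Theta$; in iteration $t$, agent $i$ receives $\mu_{t-1}^j$ from all $j\in\mathcal{I}_i$ and sets $\mu_t^i(\theta)\propto\ell_i(s_{1,t}^i\mid\theta)\prod_{j\in\mathcal{I}_i\cup\{i\}}\mu_{t-1}^j(\theta)^{1/(|\mathcal{I}_i|+1)}$, normalized over $\Theta$. Constants: $-C_0=\min_{i}\min_{\theta_1\ne\theta_2\in\Theta}\min_{w\in\mathcal{S}_i}\log\frac{\ell_i(w\mid\theta_1)}{\ell_i(w\mid\theta_2)}$,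 and $C_1=\min_{\theta,\theta'\in\Theta,\ \theta\neq\theta'}\sum_{i=1}^nD(\ell_i(\cdot\mid\theta')\|\ell_i(\cdot\mid\theta))$, where $D$ is the Kullback–Leibler divergence $D(p\|q)=\sum_wp(w)\log\frac{p(w)}{q(w)}$. *)

From HB Require Import structures.
From mathcomp Require Import all_boot all_order all_algebra.
From mathcomp Require Import reals exp.
Set Implicit Arguments. Unset Strict Implicit. Unset Printing Implicit Defensive.
Import Order.TTheory GRing.Theory Num.Theory.
Local Open Scope ring_scope.

Section BFL.
Variables (R : realType) (T : finType) (n : nat).
Variable (S : 'I_n -> finType).

Definition profile := {dffun forall i : 'I_n, S i}.

(* Likelihoods: lik i w th = l_i(w | th). *)
Variable lik : forall i : 'I_n, S i -> T -> R.

(* Directed graph: E j i = there is an edge j -> i (i receives from j). *)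
Variable E : rel 'I_n.

Definition in_nbrs (i : 'I_n) : {set 'I_n} := [set j | (j != i) && E j i].

(* A history is a sequence of profiles in reverse chronological order:
   [:: s_t; s_(t-1); ...; s_1]. *)
Definition cumlik (i : 'I_n) (hist : seq profile) (th : T) : R :=
  \prod_(p <- hist) lik (p i) th.

(* Failure-free BFL beliefs mu_t^i(th), t = size hist. *)
Fixpoint belief (hist : seq profile) : 'I_n -> T -> R :=
  match hist with
  | [::] => fun _ _ => (#|T|%:R)^-1
  | p :: rest =>
      fun i th =>
        let v := fun th' : T =>
          cumlik i (p :: rest) th' *
          \prod_(j | (j == i) || (j \in in_nbrs i))
             (belief rest j th') `^ ((#|in_nbrs i|.+1)%:R^-1) in
        v th / \sum_(th' : T) v th'
  end.

(* E^*: expectation of f over t iterations of i.i.d. signals drawn under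
   thstar, independently across agents and iterations. *)
Definition expect (thstar : T) (t : nat) (f : seq profile -> R) : R :=
  \sum_(h : t.-tuple profile)
     (\prod_(p <- h) \prod_(i : 'I_n) lik (p i) thstar) * f h.

Definition KL (i : 'I_n) (p q : S i -> R) : R :=
  \sum_(w : S i) p w * ln (p w / q w).

End BFL.

Definition is_min_of (R : realType) (P : R -> Prop) (x : R) : Prop :=
  P x /\ (forall y, P y -> x <= y).

(* Taking logarithms turns the BFL update into a linear recursion: psi_(t+1)^i
   is the sum of the log-likelihood ratios observed by agent i so far plus the
   average of psi_t over the closed in-neighbourhood of i.  Hence
   f_t = - E^*[psi_t] satisfies f_(t+1) = (t+1) D + A f_t, where
   D_i = D(l_i(.|th_star) || l_i(.|th)) >= 0 and A is the neighbourhood-averaging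
   operator, so that f_(t+1) - f_t = sum_(r <= t) A^r D.  The weights of A are
   at least 1/n on every edge and on the diagonal, and strong connectivity lets
   every agent reach every other one in at most n-1 steps, so
   A^r D >= n^-n sum_k D_k >= C1 / n^n as soon as r >= n-1.  Summing over t
   gives the quadratic term; the first n-1 steps cost a linear term with
   coefficient at most sum_k D_k <= n C0, below the stated one because
   (1 - n^-n)(1 - lambda) lies in (0, 1]. *)

From HB Require Import structures.
From mathcomp Require Import all_boot all_order all_algebra.
From mathcomp Require Import reals exp.
From mathcomp Require Import ring lra.
Set Implicit Arguments. Unset Strict Implicit. Unset Printing Implicit Defensive.
Import Order.TTheory GRing.Theory Num.Theory.
Local Open Scope ring_scope.

Lemma sum_dffun_prod (R : comPzSemiRingType) (I : finType) (S : I -> finType)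
  (F : forall i, S i -> R) :
  \sum_(p : {dffun forall i, S i}) \prod_i F i (p i) = \prod_i \sum_(w : S i) F i w.
Proof.
pose G i := [ffun w : S i => F i w].
rewrite (reindex (@dffun_of_fprod I S)); last exact/onW_bij/dffun_of_fprod_bij.
rewrite (eq_bigr (fun t : fprod S => \prod_i G i (t i))); last first.
  by move=> t _; apply: eq_bigr => i _; rewrite !ffunE.
rewrite (big_fprod _ _ G).
under [RHS]eq_bigr do rewrite (big_tag F).
rewrite bigA_distr_big_dep; apply: eq_bigr => g _; apply: eq_bigr => i _.
by case: (g i) => j w; rewrite /untag; case: eqP => // e; rewrite ffunE.
Qed.

Lemma ln_prod (R : realType) (I : Type) (s : seq I) (P : pred I) (F : I -> R) :
  (forall i, 0 < F i) -> ln (\prod_(i <- s | P i) F i) = \sum_(i <- s | P i) ln (F i).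
Proof.
move=> F_gt0; elim: s => [|x s IHs]; first by rewrite !big_nil ln1.
rewrite !big_cons; case: (P x) => //.
by rewrite lnM ?IHs // posrE // prodr_gt0.
Qed.

Lemma KL_ge0 (R : realType) (n : nat) (S : 'I_n -> finType) (i : 'I_n) (p q : S i -> R) :
  (forall w, 0 < p w) -> (forall w, 0 < q w) -> \sum_w q w <= \sum_w p w -> 0 <= KL p q.
Proof.
move=> p_gt0 q_gt0 sum_le; rewrite -subr_ge0 -sumrB in sum_le.
apply: le_trans sum_le _; apply: ler_sum => w _.
have qp_gt0 : 0 < q w / p w by rewrite divr_gt0.
have ln_qp : ln (q w / p w) <= q w / p w - 1.
  by have := @le_ln1Dx R (q w / p w - 1); rewrite addrCA subrr addr0; apply; lra.
rewrite -[ln _]opprK -lnV ?posrE ?divr_gt0 // invf_div mulrN.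
have -> : p w - q w = - (p w * (q w / p w - 1)) by field; rewrite gt_eqF.
by rewrite lerN2 ler_wpM2l // ltW.
Qed.

Section NeighbourAverage.
Variables (R : realType) (n : nat) (E : rel 'I_n).
Local Notation ninv := ((n%:R : R)^-1).

Definition closed_nbr (j k : 'I_n) := (k == j) || (k \in in_nbrs E j).

Definition nbr_weight (j : 'I_n) : R := (#|in_nbrs E j|.+1)%:R^-1.

Definition nbr_avg (v : 'I_n -> R) (j : 'I_n) : R :=
  nbr_weight j * \sum_(k | closed_nbr j k) v k.

Lemma card_closed_nbr j : #|[pred k | closed_nbr j k]| = #|in_nbrs E j|.+1.
Proof.
rewrite (@eq_card _ _ [predU1 j & in_nbrs E j]) ?cardU1 //.
by rewrite inE eqxx.
Qed.

Lemma nbr_weight_gt0 j : 0 < nbr_weight j.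
Proof. by rewrite invr_gt0 ltr0n. Qed.

Lemma nbr_weight_ge j : ninv <= nbr_weight j.
Proof.
have n_gt0 : (0 < n)%N := leq_ltn_trans (leq0n j) (ltn_ord j).
rewrite lef_pV2 ?posrE ?ltr0n // ler_nat -card_closed_nbr.
by rewrite -[leqRHS](card_ord n) max_card.
Qed.

Lemma eq_nbr_avg v w : v =1 w -> nbr_avg v =1 nbr_avg w.
Proof. by move=> vw j; congr (_ * _); apply: eq_bigr => k _. Qed.

Lemma nbr_avgD v w j : nbr_avg (fun k => v k + w k) j = nbr_avg v j + nbr_avg w j.
Proof. by rewrite /nbr_avg big_split mulrDr. Qed.

Lemma nbr_avgN v j : nbr_avg (fun k => - v k) j = - nbr_avg v j.
Proof. by rewrite /nbr_avg sumrN mulrN. Qed.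

Lemma nbr_avg0 j : nbr_avg (fun _ => 0) j = 0.
Proof. by rewrite /nbr_avg big1 ?mulr0. Qed.

Lemma nbr_avg_sum m (w : nat -> 'I_n -> R) j :
  nbr_avg (fun k => \sum_(r < m) w r k) j = \sum_(r < m) nbr_avg (w r) j.
Proof. by rewrite /nbr_avg exchange_big mulr_sumr. Qed.

Lemma nbr_avg_ge_min v j m : (forall k, m <= v k) -> m <= nbr_avg v j.
Proof.
move=> v_ge; apply: (@le_trans _ _ (nbr_weight j * \sum_(k | closed_nbr j k) m)).
  by rewrite sumr_const card_closed_nbr -mulr_natr mulrCA mulVf ?pnatr_eq0 ?mulr1.
by rewrite ler_wpM2l ?ler_sum // ltW // nbr_weight_gt0.
Qed.

Lemma nbr_avg_ge0 v j : (forall k, 0 <= v k) -> 0 <= nbr_avg v j.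
Proof. exact: nbr_avg_ge_min. Qed.

Lemma nbr_avg_ge_term v j k :
  (forall k, 0 <= v k) -> closed_nbr j k -> ninv * v k <= nbr_avg v j.
Proof.
move=> v_ge0 jk; rewrite /nbr_avg (bigD1 k) //= mulrDr.
apply: ler_wpDr; first by rewrite mulr_ge0 ?sumr_ge0 // ltW // nbr_weight_gt0.
by rewrite ler_wpM2r // nbr_weight_ge.
Qed.

Lemma iter_nbr_avg_ge_min q v j m : (forall k, m <= v k) -> m <= iter q nbr_avg v j.
Proof. by elim: q j => [|q IHq] j v_ge //=; apply: nbr_avg_ge_min => k; apply: IHq. Qed.

Lemma iter_nbr_avg_ge0 q v j : (forall k, 0 <= v k) -> 0 <= iter q nbr_avg v j.
Proof. exact: iter_nbr_avg_ge_min. Qed.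

Lemma iter_nbr_avg_ge_self q v j :
  (forall k, 0 <= v k) -> ninv ^+ q * v j <= iter q nbr_avg v j.
Proof.
elim: q j => [|q IHq] j v_ge0 /=; first by rewrite expr0 mul1r.
have step : ninv * iter q nbr_avg v j <= nbr_avg (iter q nbr_avg v) j.
  by apply: nbr_avg_ge_term; [move=> k; apply: iter_nbr_avg_ge0 | rewrite /closed_nbr eqxx].
apply: le_trans step.
by rewrite exprS -mulrA ler_wpM2l ?invr_ge0 ?ler0n ?IHq.
Qed.

Lemma iter_nbr_avg_ge_path p k v : (forall x, 0 <= v x) -> path E k p ->
  ninv ^+ size p * v k <= iter (size p) nbr_avg v (last k p).
Proof.
elim: p k v => [|l p IHp] k v v_ge0; first by rewrite /= expr0 mul1r.
case/andP=> Ekl lp; rewrite iterSr.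
have avg_ge0 x : 0 <= nbr_avg v x by apply: nbr_avg_ge0.
apply: le_trans (IHp l _ avg_ge0 lp).
rewrite exprSr -mulrA ler_wpM2l ?exprn_ge0 ?invr_ge0 ?ler0n //.
apply: nbr_avg_ge_term => //; rewrite /closed_nbr.
by have [-> //|kl] := eqVneq k l; rewrite inE kl Ekl orbT.
Qed.

Hypothesis strongly_connected : forall i j : 'I_n, connect E i j.

Lemma short_path k j : exists2 p, path E k p & last k p = j /\ (size p <= n.-1)%N.
Proof.
have /connectP [p kp ->] := strongly_connected k j.
have [p' kp' uniq_p' _] := shortenP kp.
exists p' => //; split => //.
have := max_card (mem (k :: p')); rewrite card_ord (card_uniqP uniq_p') /=.
by move=> size_lt; rewrite -ltnS (leq_trans size_lt) // leqSpred.
Qed.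

Lemma iter_nbr_avg_ge_conn v j k :
  (forall x, 0 <= v x) -> ninv ^+ n.-1 * v k <= iter n.-1 nbr_avg v j.
Proof.
move=> v_ge0; have [p kp [<- size_p]] := short_path k j.
rewrite -(subnK size_p) iterD exprD -mulrA.
have iter_ge0 q x : 0 <= iter q nbr_avg v x by apply: iter_nbr_avg_ge0.
apply: le_trans (iter_nbr_avg_ge_self _ _ (iter_ge0 (size p))).
by rewrite ler_wpM2l ?exprn_ge0 ?invr_ge0 ?ler0n ?iter_nbr_avg_ge_path.
Qed.

Lemma iter_nbr_avg_ge_mass v r j : (forall x, 0 <= v x) -> (n.-1 <= r)%N ->
  ninv ^+ n * \sum_k v k <= iter r nbr_avg v j.
Proof.
move=> v_ge0 r_ge; rewrite -(subnK r_ge) iterD; apply: iter_nbr_avg_ge_min => x.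
have n_gt0 : (0 < n)%N := leq_ltn_trans (leq0n x) (ltn_ord x).
have -> : ninv ^+ n = ninv * ninv ^+ n.-1 by rewrite -exprS prednK.
rewrite -mulrA ler_pdivrMl ?ltr0n //.
have -> : n%:R * iter n.-1 nbr_avg v x = \sum_(k < n) iter n.-1 nbr_avg v x.
  by rewrite sumr_const card_ord mulr_natl.
rewrite mulr_sumr.
by apply: ler_sum => k _; apply: iter_nbr_avg_ge_conn.
Qed.

End NeighbourAverage.

Arguments nbr_weight {R n} E j.

Definition bfl_lambda (R : realType) (n : nat) : R := (1 - (n%:R^-1) ^+ n) `^ (n%:R^-1).

Lemma bfl_denom_gt0_le1 (R : realType) (n : nat) : (1 < n)%N ->
  0 < (1 - (n%:R ^+ n)^-1) * (1 - bfl_lambda R n) <= 1.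
Proof.
move=> n_gt1.
have n_gt0 : 0 < n%:R :> R by rewrite ltr0n ltnW.
have x_gt0 : 0 < 1 - ((n%:R : R) ^+ n)^-1.
  by rewrite subr_gt0 invf_lt1 ?exprn_gt0 // exprn_egt1 ?ltr1n // -lt0n ltnW.
have x_lt1 : 1 - ((n%:R : R) ^+ n)^-1 < 1 by rewrite gtrBl invr_gt0 exprn_gt0.
have lambda_ge0 : 0 <= bfl_lambda R n := powR_ge0 _ _.
have lambda_lt1 : bfl_lambda R n < 1.
  rewrite /bfl_lambda exprVn; apply: (@lt_le_trans _ _ (1 `^ n%:R^-1)).
    by rewrite gt0_ltr_powR ?invr_gt0 // nnegrE ltW.
  by rewrite powR1.
apply/andP; split; first by rewrite mulr_gt0 // subr_gt0.
apply: mulr_ile1; lra.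
Qed.

Lemma bfl_linear_coef_ge (R : realType) (n : nat) (C0 s : R) :
  0 <= s -> s <= n%:R * C0 ->
  (n%:R^-1) ^+ n * s * (n.-1)%:R
    <= n%:R * C0 / ((1 - (n%:R ^+ n)^-1) * (1 - bfl_lambda R n)).
Proof.
(* For n = 1 the denominator vanishes, so the right-hand side is 0 / 0 = 0. *)
move=> s_ge0; case: n => [|[|n]] s_le.
- by rewrite !mul0r mulr0.
- by rewrite mulr0 expr1n invr1 subrr mul0r invr0 mulr0.
have /andP[den_gt0 den_le1] := bfl_denom_gt0_le1 R (isT : 1 < n.+2)%N.
apply: (le_trans _ (_ : n.+2%:R * C0 <= _)); last first.
  by rewrite ler_pdivlMr // ler_piMr // (le_trans s_ge0).
apply: le_trans s_le; rewrite mulrAC ler_piMl // exprVn ler_pdivrMl ?exprn_gt0 //.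
by rewrite mulr1 -natrX ler_nat (leq_trans (leq_pred _)) // ltnW // ltn_expl.
Qed.

Section Drift.
Variables (R : realType) (n : nat) (E : rel 'I_n) (D : 'I_n -> R).
Local Notation avg := (nbr_avg E).
Local Notation mass_floor := ((n%:R : R)^-1 ^+ n * \sum_k D k).

Fixpoint drift t : 'I_n -> R :=
  if t is t'.+1 then fun j => t'.+1%:R * D j + avg (drift t') j else fun=> 0.

Definition spread t j := \sum_(r < t) iter r avg D j.

Lemma driftS t j : drift t.+1 j = drift t j + spread t.+1 j.
Proof.
elim: t j => [|t IHt] j; first by rewrite /spread big_ord1 /= nbr_avg0 mul1r addr0 add0r.
rewrite [LHS]/= (eq_nbr_avg _ IHt) nbr_avgD [drift t.+1 j]/=.
rewrite /spread big_ord_recl /= -nbr_avg_sum (mulrS _ t.+1); ring.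
Qed.

Hypothesis D_ge0 : forall k, 0 <= D k.
Hypothesis strongly_connected : forall i j : 'I_n, connect E i j.

Lemma spread_ge t j : mass_floor * (t%:R - (n.-1)%:R) <= spread t j.
Proof.
have floor_ge0 : 0 <= mass_floor by rewrite mulr_ge0 ?exprn_ge0 ?invr_ge0 ?sumr_ge0.
elim: t => [|t IHt].
  by rewrite /spread big_ord0 sub0r mulrN oppr_le0 mulr_ge0.
rewrite /spread big_ord_recr /= -/(spread t j).
have [mixed|early] := leqP n.-1 t.
  have := iter_nbr_avg_ge_mass strongly_connected j D_ge0 mixed.
  rewrite -addn1 natrD; lra.
apply: (@le_trans _ _ 0).
  by rewrite mulr_ge0_le0 // subr_le0 ler_nat.
by rewrite addr_ge0 ?iter_nbr_avg_ge0 // sumr_ge0 // => r _; apply: iter_nbr_avg_ge0.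
Qed.

Lemma drift_ge t j :
  mass_floor * (t%:R ^+ 2 + t%:R - 2 * (n.-1)%:R * t%:R) <= 2 * drift t j.
Proof.
elim: t => [|t IHt]; first by rewrite /= mulr0 expr0n /= mulr0 !addr0 subrr mulr0.
rewrite driftS; have := spread_ge t.+1 j.
rewrite -addn1 natrD; nra.
Qed.

Lemma neg_drift_le C0 C1 t j : (forall k, D k <= C0) -> C1 <= \sum_k D k ->
  - drift t j <= n%:R * C0 / ((1 - (n%:R ^+ n)^-1) * (1 - bfl_lambda R n)) * t%:R
                 - C1 / (2 * n%:R ^+ n) * t%:R ^+ 2.
Proof.
move=> D_le C1_le.
have n_gt0 : 0 < n%:R :> R by rewrite ltr0n (leq_ltn_trans _ (ltn_ord j)).
have mass_ge0 : 0 <= \sum_k D k := sumr_ge0 _ (fun k _ => D_ge0 k).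
have mass_le : \sum_k D k <= n%:R * C0.
  by rewrite (le_trans (ler_sum _ (fun k _ => D_le k))) // sumr_const card_ord mulr_natl.
have := bfl_linear_coef_ge mass_ge0 mass_le; have := drift_ge t j.
set m := _ * \sum_k D k; set K := _ / _ => lower coef_ge.
have m_ge0 : 0 <= m by apply: mulr_ge0 => //; rewrite exprn_ge0 // invr_ge0 ltW.
have m_ge : C1 * n%:R^-1 ^+ n <= m by rewrite [m]mulrC ler_wpM2r // exprn_ge0 // invr_ge0 ltW.
have -> : C1 / (2 * n%:R ^+ n) = C1 * n%:R^-1 ^+ n / 2.
  by rewrite exprVn; field; rewrite expf_neq0 // gt_eqF.
have t_ge0 : 0 <= t%:R :> R := ler0n _ _.
have := ler_wpM2r t_ge0 coef_ge; have := ler_wpM2r (sqr_ge0 t%:R) m_ge.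
have := mulr_ge0 m_ge0 t_ge0.
lra.
Qed.

End Drift.

Section Expectation.
Variables (R : realType) (T : finType) (thstar : T) (n : nat)
  (S : 'I_n -> finType) (lik : forall i : 'I_n, S i -> T -> R).
Local Notation Ex := (expect lik thstar).

Definition profile_weight (p : profile S) : R := \prod_k lik (p k) thstar.

Lemma expectS t (f : seq (profile S) -> R) :
  Ex t.+1 f = \sum_p profile_weight p * Ex t (fun h => f (p :: h)).
Proof.
rewrite /expect (reindex (fun ph : profile S * t.-tuple (profile S) => [tuple of ph.1 :: ph.2])).
  rewrite -(pair_bigA _ (fun p (h : t.-tuple _) =>
    (\prod_(q <- [tuple of p :: h]) profile_weight q) * f (p :: h))) /=.
  apply: eq_bigr => p _; rewrite big_distrr /=.
  by apply: eq_bigr => h _; rewrite big_cons mulrA.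
exists (fun h : t.+1.-tuple (profile S) => (thead h, [tuple of behead h])).
  by move=> [p h] _ /=; rewrite theadE; congr (_, _); apply: val_inj.
by move=> h _ /=; rewrite -tuple_eta.
Qed.

Lemma expect0 f : Ex 0 f = f [::].
Proof.
rewrite /expect (big_pred1 [tuple]) => [|h]; first by rewrite big_nil mul1r.
by rewrite (tuple0 h); apply/esym/eqP.
Qed.

Lemma eq_expect t f g : {in [pred h | size h == t], f =1 g} -> Ex t f = Ex t g.
Proof. by move=> fg; apply: eq_bigr => h _; rewrite fg // inE size_tuple. Qed.

Lemma expectD t f g : Ex t (fun h => f h + g h) = Ex t f + Ex t g.
Proof. by rewrite /expect -big_split; apply: eq_bigr => h _; rewrite mulrDr. Qed.

Lemma expectZ t c f : Ex t (fun h => c * f h) = c * Ex t f.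
Proof. by rewrite /expect mulr_sumr; apply: eq_bigr => h _; rewrite mulrCA. Qed.

Lemma expect_sum t (I : finType) (P : pred I) (F : I -> seq (profile S) -> R) :
  Ex t (fun h => \sum_(k | P k) F k h) = \sum_(k | P k) Ex t (F k).
Proof. by rewrite /expect exchange_big; apply: eq_bigr => h _; rewrite mulr_sumr. Qed.

Hypothesis lik_sum : forall i : 'I_n, \sum_(w : S i) lik w thstar = 1.

Lemma sum_profile_weight : \sum_p profile_weight p = 1.
Proof.
by rewrite (sum_dffun_prod (fun k (w : S k) => lik w thstar)) big1 // => k _.
Qed.

Lemma sum_profile_weight_marginal j (G : forall k, S k -> R) :
  \sum_p profile_weight p * G j (p j) = \sum_(w : S j) lik w thstar * G j w.
Proof.
pose F k (w : S k) := lik w thstar * (if k == j then G k w else 1).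
transitivity (\sum_(p : profile S) \prod_k F k (p k)).
  apply: eq_bigr => p _; rewrite big_split /=; congr (_ * _).
  by rewrite (bigD1 j) //= eqxx big1 ?mulr1 // => k /negbTE ->.
rewrite sum_dffun_prod (bigD1 j) //= [X in _ * X]big1 ?mulr1; last first.
  by move=> k /negbTE kj; under eq_bigr do rewrite /F kj mulr1; apply: lik_sum.
by apply: eq_bigr => w _; rewrite /F eqxx.
Qed.

Lemma expect_cst t c : Ex t (fun=> c) = c.
Proof.
elim: t => [|t IHt]; first by rewrite expect0.
by rewrite expectS; under eq_bigr do rewrite IHt; rewrite -mulr_suml sum_profile_weight mul1r.
Qed.

Lemma expect_sum_hist t (g : profile S -> R) :
  Ex t (fun h => \sum_(q <- h) g q) = t%:R * \sum_p profile_weight p * g p.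
Proof.
elim: t => [|t IHt]; first by rewrite expect0 big_nil mul0r.
rewrite expectS.
under eq_bigr => p _.
  rewrite (@eq_expect _ _ (fun h => g p + \sum_(q <- h) g q)); last first.
    by move=> h _; rewrite big_cons.
  rewrite expectD expect_cst IHt mulrDr.
  over.
by rewrite big_split /= -mulr_suml sum_profile_weight mul1r mulrS mulrDl mul1r.
Qed.

End Expectation.

Section LogRatio.
Variables (R : realType) (T : finType) (thstar th : T) (n : nat)
  (S : 'I_n -> finType) (lik : forall i : 'I_n, S i -> T -> R) (E : rel 'I_n).
Hypothesis lik_gt0 : forall i (w : S i) x, 0 < lik w x.
Local Notation bel := (belief lik E).
Local Notation Ex := (expect lik thstar).

Definition unnorm_belief p h j x :=
  cumlik lik j (p :: h) x * \prod_(k | closed_nbr E j k) bel h k x `^ nbr_weight E j.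

Lemma belief_cons p h j x :
  bel (p :: h) j x = unnorm_belief p h j x / \sum_y unnorm_belief p h j y.
Proof. by []. Qed.

Lemma unnorm_belief_gt0 p h j x :
  (forall k y, 0 < bel h k y) -> 0 < unnorm_belief p h j x.
Proof.
by move=> bel_gt0; rewrite mulr_gt0 ?prodr_gt0 // => k _; rewrite powR_gt0.
Qed.

Lemma belief_gt0 h j x : 0 < bel h j x.
Proof.
elim: h j x => [|p h IHh] j x.
  by rewrite invr_gt0 ltr0n; apply/card_gt0P; exists x.
have V_gt0 y : 0 < unnorm_belief p h j y by apply: unnorm_belief_gt0.
rewrite belief_cons divr_gt0 // (bigD1 x) //= ltr_pwDl // sumr_ge0 // => y _.
exact/ltW.
Qed.

Definition log_ratio h j := ln (bel h j th / bel h j thstar).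

Definition lik_log_ratio k (w : S k) := ln (lik w th / lik w thstar).

Lemma log_ratio_nil j : log_ratio [::] j = 0.
Proof.
by rewrite /log_ratio -[bel [::] j thstar]/(bel [::] j th) divff ?ln1 ?gt_eqF ?belief_gt0.
Qed.

Lemma log_ratio_cons p h j :
  log_ratio (p :: h) j =
  \sum_(q <- p :: h) lik_log_ratio (q j) + nbr_avg E (log_ratio h) j.
Proof.
pose V := unnorm_belief p h j.
have V_gt0 x : 0 < V x by apply/unnorm_belief_gt0/belief_gt0.
have lnV x : ln (V x) = \sum_(q <- p :: h) ln (lik (q j) x) +
    nbr_weight E j * \sum_(k | closed_nbr E j k) ln (bel h k x).
  rewrite lnM ?posrE ?prodr_gt0 // => [|k _]; last by rewrite powR_gt0 ?belief_gt0.
  rewrite /cumlik ln_prod // ln_prod => [|k]; last by rewrite powR_gt0 ?belief_gt0.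
  by rewrite mulr_sumr; congr (_ + _); apply: eq_bigr => k _; rewrite ln_powR.
have Z_gt0 : 0 < \sum_x V x by rewrite (bigD1 th) //= ltr_pwDl // sumr_ge0 // => x _; apply/ltW.
rewrite /log_ratio !belief_cons -/V.
have -> : V th / (\sum_x V x) / (V thstar / \sum_x V x) = V th / V thstar.
  by field; rewrite !gt_eqF.
rewrite ln_div ?posrE // !lnV /lik_log_ratio /nbr_avg.
under [X in _ = X + _]eq_bigr do rewrite ln_div ?posrE //.
under [X in _ = _ + _ * X]eq_bigr do rewrite ln_div ?posrE ?belief_gt0 //.
rewrite !sumrB; ring.
Qed.

Definition divergence k := KL (fun w : S k => lik w thstar) (fun w => lik w th).

Lemma sum_lik_log_ratio k : \sum_(w : S k) lik w thstar * lik_log_ratio w = - divergence k.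
Proof.
rewrite /divergence /KL -sumrN; apply: eq_bigr => w _.
by rewrite /lik_log_ratio -mulrN -lnV ?invf_div // posrE divr_gt0.
Qed.

Hypothesis lik_sum : forall i, \sum_(w : S i) lik w thstar = 1.

Lemma expect_log_ratioS t j :
  Ex t.+1 (log_ratio^~ j) =
  - (t.+1%:R * divergence j) + nbr_avg E (fun k => Ex t (log_ratio^~ k)) j.
Proof.
rewrite expectS.
under eq_bigr => p _.
  rewrite (eq_expect thstar lik (g := fun h => \sum_(q <- p :: h) lik_log_ratio (q j) +
      nbr_weight E j * \sum_(k | closed_nbr E j k) log_ratio h k)); last first.
    by move=> h _; rewrite log_ratio_cons.
  rewrite expectD expectZ expect_sum mulrDr.
  over.
rewrite big_split /= -mulr_suml sum_profile_weight // mul1r.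
rewrite -(expectS thstar lik t (fun h => \sum_(q <- h) lik_log_ratio (q j))).
rewrite expect_sum_hist // (sum_profile_weight_marginal lik_sum j lik_log_ratio).
by rewrite sum_lik_log_ratio mulrN.
Qed.

Lemma expect_log_ratio t j : Ex t (log_ratio^~ j) = - drift E divergence t j.
Proof.
elim: t j => [|t IHt] j; first by rewrite expect0 log_ratio_nil oppr0.
rewrite expect_log_ratioS /= opprD -nbr_avgN.
by congr (_ + _); apply: eq_nbr_avg.
Qed.

Lemma divergence_le k C0 : (forall w : S k, - C0 <= lik_log_ratio w) -> divergence k <= C0.
Proof.
move=> C0_le; rewrite -[divergence k]opprK -sum_lik_log_ratio lerNl.
rewrite -[leLHS]mul1r -(lik_sum k) mulr_suml.
by apply: ler_sum => w _; rewrite ler_wpM2l // ltW.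
Qed.

End LogRatio.

Theorem lemma4 (R : realType) (T : finType) (thstar : T) (n : nat)
  (S : 'I_n -> finType) (lik : forall i : 'I_n, S i -> T -> R)
  (E : rel 'I_n) (C0 C1 : R)
  (lik_pos : forall (i : 'I_n) (w : S i) (th : T), 0 < lik i w th)
  (lik_sum : forall (i : 'I_n) (th : T), \sum_(w : S i) lik i w th = 1)
  (strongly_connected : forall i j : 'I_n, connect E i j)
  (C0_def : is_min_of (fun v : R => exists (i : 'I_n) (th1 th2 : T) (w : S i),
                th1 != th2 /\ v = ln (lik i w th1 / lik i w th2)) (- C0))
  (C1_def : is_min_of (fun v : R => exists th th' : T,
                th != th' /\
                v = \sum_(i : 'I_n) KL (fun w => lik i w th') (fun w => lik i w th))
              C1)
  (th : T) (th_ne : th != thstar) (i : 'I_n) (t : nat) (t_ge1 : (1 <= t)%N) :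
  let lambda := (1 - (n%:R^-1) ^+ n) `^ (n%:R^-1) in
  expect lik thstar t
    (fun h => ln (belief lik E h i th / belief lik E h i thstar))
  <= n%:R * C0 / ((1 - (n%:R ^+ n)^-1) * (1 - lambda)) * t%:R
     - C1 / (2 * n%:R ^+ n) * t%:R ^+ 2.
Proof.
rewrite /= -/(bfl_lambda R n) (expect_log_ratio th E lik_pos (lik_sum^~ thstar)).
set D := divergence thstar th lik.
have D_ge0 k : 0 <= D k by apply: KL_ge0 => [w|w|]; rewrite ?lik_sum.
apply: (neg_drift_le D_ge0 strongly_connected).
  by move=> k; apply: divergence_le => // w; apply: C0_def.2; exists k, th, thstar, w.
by apply: C1_def.2; exists th, thstar.
Qed.
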